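(* Let $N,d,e,s\in\mathbb{N}$ (with $N,d\neq0$) and $\lambda,\lambda'\in\mathbb{Q}$, and let $L\subseteq\mathbb{Q}^2$ be the lattice generated by \[\left(\tfrac1N,\tfrac1N\right),\quad(\lambda,\lambda'),\quad\left(\tfrac ed\lambda+\tfrac{s}{Nd},\ \tfrac ed\lambda'+\tfrac{s}{Nd}\right).\] Let $r$ be any integer such that $r e/\gcd(d,e)\equiv1\pmod{d/\gcd(d,e)}$, and set \[\widetilde\lambda=\frac{\gcd(d,e)}{d}\lambda+\frac{rs}{Nd},\qquad\widetilde\lambda'=\frac{\gcd(d,e)}{d}\lambda'+\frac{rs}{Nd},\qquad\widetilde N=N\frac{\gcd(d,e)}{\gcd(d,e,s)}.\] Then $L$ is generated by $(1/\widetilde N,1/\widetilde N)$ and $(\widetilde\lambda,\widetilde\lambda')$. *)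

From HB Require Import structures.
From mathcomp Require Import all_boot all_order all_algebra.
Set Implicit Arguments. Unset Strict Implicit. Unset Printing Implicit Defensive.
Import Order.TTheory GRing.Theory Num.Theory.
Local Open Scope ring_scope.

Definition zspan (gs : seq (rat * rat)) (v : rat * rat) : Prop :=
  exists cs : seq int, size cs = size gs /\
    v = (\sum_(i < size gs) (cs`_i)%:~R * (nth (0, 0) gs i).1,
         \sum_(i < size gs) (cs`_i)%:~R * (nth (0, 0) gs i).2).

Definition same_lattice (gs hs : seq (rat * rat)) : Prop :=
  forall v, zspan gs v <-> zspan hs v.

From HB Require Import structures.
From mathcomp Require Import all_boot all_order all_algebra.
From mathcomp Require Import ring.
Import Order.TTheory GRing.Theory Num.Theory.
Local Open Scope ring_scope.

(* Write d = d'g, e = e'g, g = g'g0 and s = s'g0 with g0 = gcd(g, s), so that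
   Nt = N g'; let u = (1/N, 1/N), w the third old generator and u' = (1/Nt, 1/Nt).
   The congruence gives r e' = 1 + t d' and Bezout gives al g' + be s' = 1.
   Since d' w - e' (lam, lam') = s' u', we get u' = al u + be (d' w - e' (lam, lam'))
   and (lt, lt') = r w - t (lam, lam'); conversely u = g' u',
   (lam, lam') = d' (lt, lt') - r s' u' and w = e' (lt, lt') - t s' u'. *)

Lemma zspan_nil v : zspan [::] v <-> v = (0, 0).
Proof.
split=> [[cs [_ ->]]|->]; first by rewrite !big_ord0.
by exists [::]; rewrite !big_ord0.
Qed.

Lemma zspan_cons a gs v : zspan (a :: gs) v <->
  exists (x : int) w, zspan gs w /\
    v = (x%:~R * a.1 + w.1, x%:~R * a.2 + w.2).
Proof.
split=> [[[|x cs] [//= [size_cs] ->]]|[x [w [[cs [size_cs ->]] ->]]]].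
  exists x; eexists; split; first by exists cs.
  by rewrite !big_ord_recl.
by exists (x :: cs); split; [rewrite /= size_cs | rewrite !big_ord_recl].
Qed.

Lemma zspan0 gs : zspan gs (0, 0).
Proof.
elim: gs => [|a gs IHgs]; first exact/zspan_nil.
by apply/zspan_cons; exists 0, (0, 0); rewrite !mul0r !addr0.
Qed.

Lemma zspanD gs v w :
  zspan gs v -> zspan gs w -> zspan gs (v.1 + w.1, v.2 + w.2).
Proof.
elim: gs v w => [|a gs IHgs] v w.
  by move=> /zspan_nil -> /zspan_nil ->; rewrite addr0; exact/zspan_nil.
move=> /zspan_cons [x [v' [v'_in ->]]] /zspan_cons [y [w' [w'_in ->]]].
apply/zspan_cons; exists (x + y), (v'.1 + w'.1, v'.2 + w'.2).
by split; [exact: IHgs | congr pair; rewrite /= intrD; ring].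
Qed.

Lemma zspanZ gs (c : int) v :
  zspan gs v -> zspan gs (c%:~R * v.1, c%:~R * v.2).
Proof.
elim: gs v => [|a gs IHgs] v.
  by move=> /zspan_nil ->; rewrite mulr0; exact/zspan_nil.
move=> /zspan_cons [x [w [w_in ->]]].
apply/zspan_cons; exists (c * x), (c%:~R * w.1, c%:~R * w.2).
by split; [exact: IHgs | congr pair; rewrite /= intrM; ring].
Qed.

Lemma zspan_sub gs hs :
  (forall h, h \in hs -> zspan gs h) -> forall v, zspan hs v -> zspan gs v.
Proof.
elim: hs => [|h hs IHhs] hs_in v; first by move=> /zspan_nil ->; exact: zspan0.
move=> /zspan_cons [x [w [w_in ->]]].
apply: (@zspanD _ (_, _) w); first by apply: zspanZ; apply: hs_in; rewrite mem_head.
by apply: IHhs w_in => h' h'_in; apply: hs_in; rewrite in_cons h'_in orbT.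
Qed.

Lemma same_lattice_mem gs hs :
  (forall h, h \in hs -> zspan gs h) -> (forall g, g \in gs -> zspan hs g) ->
  same_lattice gs hs.
Proof. by move=> hs_in gs_in v; split; apply: zspan_sub. Qed.

Lemma zspan3_comb (x y z : int) a b c v :
  v = (x%:~R * a.1 + y%:~R * b.1 + z%:~R * c.1,
       x%:~R * a.2 + y%:~R * b.2 + z%:~R * c.2) ->
  zspan [:: a; b; c] v.
Proof.
by move=> ->; exists [:: x; y; z]; rewrite !big_ord_recl !big_ord0 !addr0 !addrA.
Qed.

Lemma zspan2_comb (x y : int) a b v :
  v = (x%:~R * a.1 + y%:~R * b.1, x%:~R * a.2 + y%:~R * b.2) ->
  zspan [:: a; b] v.
Proof. by move=> ->; exists [:: x; y]; rewrite !big_ord_recl !big_ord0 !addr0. Qed.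

Section ChangeOfBasis.

Context {N d e s g d' e' g' g0 s' : nat} {lam lam' : rat} {r t al be : int}.
Hypotheses (N_neq0 : N != 0%N) (d'_neq0 : d' != 0%N).
Hypotheses (g'_neq0 : g' != 0%N) (g0_neq0 : g0 != 0%N).
Hypotheses (Ed : d = (d' * g)%N) (Ee : e = (e' * g)%N).
Hypotheses (Eg : g = (g' * g0)%N) (Es : s = (s' * g0)%N).
Hypotheses (r_inv : r * e'%:Z = 1 + t * d'%:Z) (bezout : al * g'%:Z + be * s'%:Z = 1).

Let old_gens := [:: ((N%:R)^-1, (N%:R)^-1); (lam, lam');
  (e%:R / d%:R * lam + s%:R / (N * d)%N%:R,
   e%:R / d%:R * lam' + s%:R / (N * d)%N%:R)].

Let new_gens := [:: (((N * g')%N%:R)^-1, ((N * g')%N%:R)^-1);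
  (g%:R / d%:R * lam + (r * s%:Z)%:~R / (N * d)%N%:R,
   g%:R / d%:R * lam' + (r * s%:Z)%:~R / (N * d)%N%:R)].

(* [r_inv] and [bezout] over Q, solved for [t] and [al] so that [field] can use them. *)
Let t_eq : t%:~R = (r%:~R * e'%:R - 1) / d'%:R :> rat.
Proof.
have /(congr1 (fun z : int => z%:~R : rat)) := r_inv.
rewrite intrD !intrM -!pmulrn => ->.
by field; rewrite pnatr_eq0.
Qed.

Let al_eq : al%:~R = (1 - be%:~R * s'%:R) / g'%:R :> rat.
Proof.
have /(congr1 (fun z : int => z%:~R : rat)) := bezout.
rewrite intrD !intrM -!pmulrn rmorph1 => bezout_Q; rewrite -[X in X - _]bezout_Q.
by field; rewrite pnatr_eq0.
Qed.

Lemma new_gens_in_old h : h \in new_gens -> zspan old_gens h.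
Proof.
rewrite /new_gens /old_gens Ed Ee Es Eg !inE => /orP[] /eqP ->;
  [ apply: (zspan3_comb al (- be * e'%:Z) (be * d'%:Z))
  | apply: (zspan3_comb 0 (- t) r) ];
  rewrite !(intrM, intrN) -!pmulrn !natrM /= ?al_eq ?t_eq;
  by congr pair; field; rewrite !pnatr_eq0 ?N_neq0 ?d'_neq0 ?g'_neq0 ?g0_neq0.
Qed.

Lemma old_gens_in_new h : h \in old_gens -> zspan new_gens h.
Proof.
rewrite /new_gens /old_gens Ed Ee Es Eg !inE => /or3P[] /eqP ->;
  [ apply: (zspan2_comb g' 0)
  | apply: (zspan2_comb (- r * s'%:Z) d')
  | apply: (zspan2_comb (- t * s'%:Z) e') ];
  rewrite !(intrM, intrN) -!pmulrn !natrM /= ?t_eq;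
  by congr pair; field; rewrite !pnatr_eq0 ?N_neq0 ?d'_neq0 ?g'_neq0 ?g0_neq0.
Qed.

Lemma same_lattice_change_of_basis : same_lattice old_gens new_gens.
Proof. exact: same_lattice_mem new_gens_in_old old_gens_in_new. Qed.

End ChangeOfBasis.

Lemma eqz_mod_exists {m n d : int} :
  (m = n %[mod d])%Z -> exists q : int, m = n + q * d.
Proof.
move/eqP; rewrite eqz_mod_dvd => /dvdzP [q Eq].
by exists q; rewrite -Eq addrC subrK.
Qed.

Lemma Bezout_divn_gcd {m n : nat} : (0 < gcdn m n)%N ->
  exists u v : int, u * (m %/ gcdn m n)%N%:Z + v * (n %/ gcdn m n)%N%:Z = 1.
Proof.
move=> gcd_gt0; have [u [v Euv]] := Bezoutz m n.
exists u, v; apply: (mulIf (x := (gcdn m n)%:Z)); first by rewrite eqz_nat -lt0n.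
by rewrite mul1r mulrDl -!mulrA -!PoszM !divnK ?dvdn_gcdl ?dvdn_gcdr.
Qed.

Theorem corollary6p2 (N d e s : nat) (lam lam' : rat) (r : int) :
  (N != 0)%N -> (d != 0)%N ->
  (r * (e %/ gcdn d e)%N%:Z = 1 %[mod (d %/ gcdn d e)%N%:Z])%Z ->
  let g := gcdn d e in
  let Nt := (N * (g %/ gcdn g s))%N in
  let lt := (g%:R / d%:R) * lam + (r * s%:Z)%:~R / (N * d)%N%:R in
  let lt' := (g%:R / d%:R) * lam' + (r * s%:Z)%:~R / (N * d)%N%:R in
  same_lattice
    [:: ((N%:R)^-1, (N%:R)^-1); (lam, lam');
        (e%:R / d%:R * lam + s%:R / (N * d)%N%:R,
         e%:R / d%:R * lam' + s%:R / (N * d)%N%:R)]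
    [:: ((Nt%:R)^-1, (Nt%:R)^-1); (lt, lt')].
Proof.
move=> N_neq0 d_neq0 r_inv g Nt lt lt'.
have g_gt0 : (0 < g)%N by rewrite gcdn_gt0 lt0n d_neq0.
have gs_gt0 : (0 < gcdn g s)%N by rewrite gcdn_gt0 g_gt0.
have d'_neq0 : (d %/ g != 0)%N by rewrite -lt0n divn_gt0 // dvdn_leq ?dvdn_gcdl ?lt0n.
have g'_neq0 : (g %/ gcdn g s != 0)%N by rewrite -lt0n divn_gt0 // dvdn_leq ?dvdn_gcdl.
have [t r_inv'] := eqz_mod_exists r_inv.
have [al [be bezout]] := Bezout_divn_gcd gs_gt0.
apply: (same_lattice_change_of_basis (g0 := gcdn g s)
          N_neq0 d'_neq0 g'_neq0 _ _ _ _ _ r_inv' bezout).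
- by rewrite -lt0n.
- by rewrite divnK ?dvdn_gcdl.
- by rewrite divnK ?dvdn_gcdr.
- by rewrite divnK ?dvdn_gcdl.
- by rewrite divnK ?dvdn_gcdr.
Qed.
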